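(* Let $p$ be an odd prime, $e\ge1$, and let $\mathcal M$ be an orientably-regular embedding of $K_{p[p^e]}$ with $G=\mathrm{Aut}^+(\mathcal M)$ and $H\trianglelefteq G$ the subgroup of automorphisms preserving each of the $p$ parts setwise. Suppose $H=\langle x,z\rangle$ has presentation $\langle x,z\mid x^{p^e}=z^{p^e}=1,\ z^x=z^q\rangle$ with $q=1+p^f$ for some $f\in\{1,\dots,e\}$. Then $N:=\langle x^{p^{e-f}},z\rangle$ is a normal subgroup of $G$.
   Context: $K_{m[n]}$ is the complete multipartite graph with $m$ parts of $n$ vertices each; an orientably-regular embedding of it is an orientable map with this underlying graph whose group $\mathrm{Aut}^+(\mathcal M)$ of orientation-preserving automorphisms acts regularly on arcs. Conjugation is $z^x=x^{-1}zx$. *)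

From mathcomp Require Import all_boot all_fingroup.
Set Implicit Arguments. Unset Strict Implicit. Unset Printing Implicit Defensive.
Local Open Scope group_scope.

(* Combinatorial orientable maps: a finite set of darts (arcs) D, a rotation
   R (cyclic permutation of the darts around each vertex) and an
   arc-reversing involution L.  [tl d] is the initial vertex of the dart d,
   with vertices of K_{m[n]} labelled (part, index) in 'I_m * 'I_n. *)

Definition is_Kmn_map (m n : nat) (D : finType) (R L : {perm D})
    (tl : D -> 'I_m * 'I_n) : Prop :=
  (forall d, L (L d) = d) /\
  [/\
      forall d, tl (R d) = tl d,
      forall d d', tl d = tl d' -> exists k, (R ^+ k) d = d',
      forall u, exists d, tl d = u,
      forall d, (tl d).1 != (tl (L d)).1 &
      forall u v, u.1 != v.1 -> #|[set d | (tl d == u) && (tl (L d) == v)]| = 1%N].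

Definition autp (D : finType) (R L : {perm D}) : {group {perm D}} :=
  'C([set R; L])%G.

Definition orientably_regular (D : finType) (R L : {perm D}) : Prop :=
  [transitive autp R L, on [set: D] | 'P] /\
  forall d : D, 'C_(autp R L)[d | 'P] = 1.

Definition part_stab (m n : nat) (D : finType) (R L : {perm D})
    (tl : D -> 'I_m * 'I_n) : {set {perm D}} :=
  [set g in autp R L | [forall d, (tl (g d)).1 == (tl d).1]].

From mathcomp Require Import all_boot all_fingroup all_algebra all_solvable zify.
Set Implicit Arguments. Unset Strict Implicit. Unset Printing Implicit Defensive.

(* Automorphisms of the map permute the parts, so H is normal in G.  The
   presented group is realised by a semidirect product of order p^2e, hence
   |H| >= p^2e and H = <x> <z> with <x> :&: <z> = 1; consequently every y in H
   with y^(p^f) in <z> lies in N.  For g in G both generators of N^g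
   lie in that set: (x^(p^(e-f)))^g has trivial p^f-th power, and from
   (z^g)^(x^g) = (z^g)^(1+p^f) we get (z^g)^(p^f) = [z^g, x^g] in H' <= <z>. *)

Lemma dvdn_mul_pred_exp (m a : nat) : m %| a.-1 -> m * a.-1 %| (a ^ m).-1.
Proof.
case: a => [|a] /= dv_m_a.
  by rewrite muln0 dvd0n; case: m {dv_m_a} => // m; rewrite exp0n.
rewrite predn_exp mulnC dvdn_mul //= /dvdn -modn_summ.
have a1_mod : a.+1 = 1 %[mod m] by rewrite -addn1 -modnDml (eqP dv_m_a).
under eq_bigr do rewrite -modnXm a1_mod modnXm exp1n.
by rewrite modn_summ sum1_card card_ord modnn.
Qed.

Lemma dvdn_pred_exp_1Dpexp (p f j : nat) : prime p -> 0 < f ->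
  p ^ (f + j) %| ((1 + p ^ f) ^ (p ^ j)).-1.
Proof.
move=> p_pr f_gt0; elim: j => [|j IHj]; first by rewrite addn0 expn1.
rewrite expnS mulnC expnM addnS expnS.
apply: dvdn_trans (dvdn_mul_pred_exp _); first by rewrite dvdn_pmul2l ?prime_gt0.
apply: dvdn_trans IHj; rewrite -{1}(expn1 p) dvdn_exp2l ?prime_gt1 //.
exact: leq_trans f_gt0 (leq_addr _ _).
Qed.

Local Open Scope group_scope.

Lemma metacyclic_model_homg (p e f : nat) : prime p -> (0 < e)%N -> (0 < f)%N ->
  [set: Extremal.gtype (p ^ e) (p ^ e) (1 + p ^ f)]
    \homg Grp (a : b : (a ^+ (p ^ e), b ^+ (p ^ e), b ^ a = b ^+ (1 + p ^ f))).
Proof.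
move=> p_pr e_gt0 f_gt0; set n := (p ^ e)%N; set q := (1 + p ^ f)%N.
have n_gt1 : (1 < n)%N by rewrite -(expn0 p) ltn_exp2l ?prime_gt1.
pose b := Zp1 : 'Z_n; have ob : #[b] = n by rewrite order_Zp1 Zp_cast.
have q_unit : (q%:R : 'Z_#[b])%R \is a GRing.unit.
  rewrite unitZpE ob // coprime_pexpl // /coprime /q -(prednK f_gt0) expnSr.
  by rewrite addnC gcdnMDl gcdn1.
pose u : {unit 'Z_#[b]} := Sub (q%:R)%R q_unit.
have q_modn : (q ^ n %% n = 1)%N.
  have := dvdn_trans (dvdn_exp2l p (leq_addl f e)) (dvdn_pred_exp_1Dpexp e p_pr f_gt0).
  case/dvdnP=> k /(congr1 S); rewrite prednK ?expn_gt0 ?addn_gt0 // => ->.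
  by rewrite -addn1 modnMDl modn_small.
have u_order : #[u] %| n.
  rewrite order_dvdn -val_eqE /= FinRing.val_unitX /= -GRing.natrX.
  by rewrite -Zp_nat_mod ob // q_modn.
pose s := Zp_unitm u.
have sE y : y \in <[b]> -> s y = y ^+ q.
  by move=> b_y; rewrite /s autE //= /cyclem expg_znat.
have s_ok : [/\ s \in Aut <[b]>, #[s] %| n & s b = b ^+ q].
  by rewrite Aut_aut sE ?cycle_id // order_injm ?injm_Zp_unitm ?inE.
have := Extremal.Grp n_gt1 n_gt1 (ex_intro _ s s_ok).
case/isoGrp_hom/existsP=> -[a c] /= /eqP[defG an cn ac].
by apply/existsP; exists (c, a); rewrite /= !xpair_eqE joingC defG an cn ac !eqxx.
Qed.

Lemma metacyclic_presented_card_ge (gT : finGroupType) (G : {group gT}) (p e f : nat) :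
  prime p -> (0 < e)%N -> (0 < f)%N ->
  G \isog Grp (a : b : (a ^+ (p ^ e), b ^+ (p ^ e), b ^ a = b ^+ (1 + p ^ f))) ->
  (p ^ e * p ^ e <= #|G|)%N.
Proof.
move=> p_pr e_gt0 f_gt0 isoG.
have n_gt1 : (1 < p ^ e)%N by rewrite -(expn0 p) ltn_exp2l ?prime_gt1.
have := metacyclic_model_homg p_pr e_gt0 f_gt0; rewrite -isoG => /leq_homg.
by rewrite Extremal.card.
Qed.

Section MetacyclicSubgroup.

Variables (gT : finGroupType) (p e f : nat) (x z : gT).
Hypotheses (p_pr : prime p) (f_gt0 : (0 < f)%N) (f_le_e : (f <= e)%N).
Hypotheses (xn : x ^+ (p ^ e) = 1) (zn : z ^+ (p ^ e) = 1) (zx : z ^ x = z ^+ (1 + p ^ f)).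

Let H := <<[set x; z]>>%G.
Let Z := <[z]>%G.
Let N := <<[set x ^+ (p ^ (e - f)); z]>>%G.

Hypothesis card_H : (p ^ e * p ^ e <= #|H|)%N.

Let H_x : x \in H. Proof. by rewrite mem_gen // !inE eqxx. Qed.
Let H_z : z \in H. Proof. by rewrite mem_gen // !inE eqxx orbT. Qed.

Lemma metacyclic_norm_cycle : H \subset 'N(Z).
Proof.
rewrite gen_subG subUset !sub1set -!cycle_subG normG andbT.
by rewrite norms_cycle zx groupX ?cycle_id.
Qed.

Lemma metacyclic_mulg : H :=: <[x]> * Z.
Proof.
have <- : <[x]> <*> Z = H by rewrite joing_idl joing_idr.
by rewrite norm_joinEl // (subset_trans _ metacyclic_norm_cycle) ?cycle_subG.
Qed.

Lemma metacyclic_order_TI : #[x] = (p ^ e)%N /\ <[x]> :&: Z = 1.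
Proof.
have pe_gt0 : (0 < p ^ e)%N by rewrite expn_gt0 prime_gt0.
have ox : (#[x] <= p ^ e)%N by rewrite dvdn_leq // order_dvdn xn.
have oz : (#[z] <= p ^ e)%N by rewrite dvdn_leq // order_dvdn zn.
have card_mul := mul_cardG <[x]> Z; rewrite -metacyclic_mulg -!orderE in card_mul.
have TI_gt0 := cardG_gt0 (<[x]> :&: Z).
move: card_H ox oz card_mul TI_gt0; rewrite -/Z.
set P := (p ^ e)%N; set t := #|_ :&: _| => *.
have t_le1 : (t <= 1)%N by nia.
by split; [nia | apply: card_le1_trivg].
Qed.

Lemma metacyclic_der1_sub : H^`(1) \subset Z.
Proof.
apply: der1_min metacyclic_norm_cycle _.
by rewrite metacyclic_mulg quotientMidr quotient_abelian ?cycle_abelian.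
Qed.

Lemma metacyclic_subgroup_mem y :
  y \in H -> y ^+ (p ^ f) \in Z -> y \in N.
Proof.
rewrite metacyclic_mulg => /mulsgP[_ _ /cycleP[i ->] /cycleP[j ->] ->].
have nZ w : w \in H -> w \in 'N(Z) by apply: (subsetP metacyclic_norm_cycle).
have H_y : x ^+ i * z ^+ j \in H by rewrite groupM ?groupX.
have coset_y : coset Z (x ^+ i * z ^+ j) = coset Z x ^+ i.
  have Z_zj : z ^+ j \in Z by rewrite groupX ?cycle_id.
  by rewrite morphM ?nZ ?groupX //= (coset_id Z_zj) mulg1 morphX ?nZ.
move/(coset_id (A := Z)); rewrite morphX ?nZ //= coset_y -expgM -morphX ?nZ //.
move/(coset_idr (nZ _ (groupX _ H_x))) => Z_xip.
have [ox TI] := metacyclic_order_TI.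
have : x ^+ (i * p ^ f) \in <[x]> :&: Z by rewrite inE Z_xip mem_cycle.
rewrite TI => /set1P/eqP.
have split_pe : (p ^ e = p ^ (e - f) * p ^ f)%N by rewrite -expnD subnK.
rewrite -order_dvdn ox split_pe dvdn_pmul2r ?expn_gt0 ?prime_gt0 //.
have N_xp : x ^+ (p ^ (e - f)) \in N by rewrite mem_gen // !inE eqxx.
have N_z : z \in N by rewrite mem_gen // !inE eqxx orbT.
by case/dvdnP=> k ->; rewrite mulnC expgM groupM // groupX.
Qed.

Lemma metacyclic_subgroup_normal (G : {group gT}) : H <| G -> N <| G.
Proof.
case/andP=> sHG nHG.
have H_conj w g : w \in H -> g \in G -> w ^ g \in H.
  by move=> H_w G_g; rewrite memJ_norm ?(subsetP nHG).
have sNH : N \subset H by rewrite gen_subG subUset !sub1set groupX.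
rewrite /normal (subset_trans sNH sHG) /=.
apply/subsetP => g G_g; rewrite inE -genJ gen_subG conjUg !conjg_set1 subUset !sub1set.
apply/andP; split; apply: metacyclic_subgroup_mem.
- by rewrite H_conj ?groupX.
- by rewrite -conjXg -expgM -expnD subnK // xn conj1g group1.
- by rewrite H_conj.
- have zg_xg : (z ^ g) ^ (x ^ g) = (z ^ g) ^+ (1 + p ^ f) by rewrite -conjJg zx conjXg.
  have <- : [~ z ^ g, x ^ g] = (z ^ g) ^+ (p ^ f) by rewrite commgEl zg_xg add1n expgS mulKg.
  by rewrite (subsetP metacyclic_der1_sub) // derg1 mem_commg ?H_conj.
Qed.

End MetacyclicSubgroup.

Section KmnMapAutomorphisms.

Variables (m n : nat) (D : finType) (R L : {perm D}) (tl : D -> 'I_m * 'I_n).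
Hypothesis kmn : is_Kmn_map R L tl.

Lemma commute_permE (s t : {perm D}) d : commute s t -> s (t d) = t (s d).
Proof. by move=> cst; rewrite -!permM cst. Qed.

Lemma autp_commute g s : g \in autp R L -> s \in [set R; L] -> commute g s.
Proof. by move/centP; apply. Qed.

Lemma tl_expR k d : tl ((R ^+ k) d) = tl d.
Proof.
have [_ [tlR _ _ _ _]] := kmn.
by elim: k => [|k IHk]; rewrite ?expg0 ?perm1 // expgSr permM tlR.
Qed.

Lemma autp_tl_eq g d1 d2 : g \in autp R L -> tl d1 = tl d2 -> tl (g d1) = tl (g d2).
Proof.
have [_ [_ Rcycle _ _ _]] := kmn.
move=> A_g /Rcycle[k <-].
by rewrite commute_permE ?tl_expR //; apply/commuteX/autp_commute; rewrite ?set21.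
Qed.

Lemma autp_part_eq g d1 d2 :
  g \in autp R L -> (tl d1).1 = (tl d2).1 -> (tl (g d1)).1 = (tl (g d2)).1.
Proof.
have [_ [_ _ _ no_inner_edge arc]] := kmn.
move=> A_g part12; apply/eqP; apply: contraT => /arc arc_g12.
have /card_gt0P[d] :
    (0 < #|[set d | (tl d == tl (g d1)) && (tl (L d) == tl (g d2))]|)%N.
  by rewrite arc_g12.
rewrite inE => /andP[/eqP tl_d /eqP tl_Ld].
have A_gV : g^-1 \in autp R L by rewrite groupV.
have tl_gVd : tl (g^-1 d) = tl d1.
  by rewrite (autp_tl_eq A_gV tl_d) permK.
have tl_LgVd : tl (L (g^-1 d)) = tl d2.
  rewrite -commute_permE; last by apply: autp_commute; rewrite ?set22.
  by rewrite (autp_tl_eq A_gV tl_Ld) permK.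
by have := no_inner_edge (g^-1 d); rewrite tl_gVd tl_LgVd part12 eqxx.
Qed.

Lemma part_stab_normal : part_stab R L tl <| autp R L.
Proof.
apply/andP; split; first by apply/subsetP=> h; rewrite inE => /andP[].
apply/subsetP=> g A_g; rewrite inE; apply/subsetP=> _ /imsetP[h P_h ->].
move: P_h; rewrite !inE => /andP[A_h /forallP part_h]; rewrite groupJ //=.
apply/forallP=> d; rewrite conjgE !permM -{2}(permKV g d).
by rewrite (autp_part_eq A_g (eqP (part_h _))).
Qed.

End KmnMapAutomorphisms.

Theorem lemma3p4 (p e f : nat) (D : finType) (R L : {perm D})
    (tl : D -> 'I_p * 'I_(p ^ e)) (x z : {perm D}) :
  prime p -> odd p -> (1 <= e)%N -> (1 <= f <= e)%N ->
  is_Kmn_map R L tl ->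
  orientably_regular R L ->
  x \in part_stab R L tl -> z \in part_stab R L tl ->
  part_stab R L tl = <<[set x; z]>> ->
  x ^+ (p ^ e) = 1 -> z ^+ (p ^ e) = 1 -> z ^ x = z ^+ (1 + p ^ f) ->
  part_stab R L tl \isog
    Grp (a : b : (a ^+ (p ^ e), b ^+ (p ^ e), b ^ a = b ^+ (1 + p ^ f))) ->
  <<[set x ^+ (p ^ (e - f)); z]>> <| autp R L.
Proof.
move=> p_pr _ e_gt0 /andP[f_gt0 f_le_e] kmn _ _ _ defH xn zn zx isoH.
have := part_stab_normal kmn; rewrite defH => nH; rewrite defH in isoH.
have card_H := metacyclic_presented_card_ge (G := <<[set x; z]>>%G) p_pr e_gt0 f_gt0
  isoH.
exact: metacyclic_subgroup_normal p_pr f_gt0 f_le_e xn zn zx card_H _ nH.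
Qed.
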